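(* Let $\sigma_X^2>0$, $\sigma_{N_1}^2,\dots,\sigma_{N_K}^2>0$, $D>0$, let $(r_1,\dots,r_K)\in\mathcal{F}(D)$, and let $\alpha_1\ge\alpha_2\ge\dots\ge\alpha_K\ge0$. Define, for $k=1,\dots,K$, $$R_k^\ast=r_k+\frac12\log\Big(\frac1{\sigma_X^2}+\sum_{i=k}^K\frac{1-e^{-2r_i}}{\sigma_{N_i}^2}\Big)-\frac12\log\Big(\frac1{\sigma_X^2}+\sum_{i=k+1}^K\frac{1-e^{-2r_i}}{\sigma_{N_i}^2}\Big)$$ (an empty sum being $0$). Then $(R_1^\ast,\dots,R_K^\ast)\in\mathcal{R}(r_1,\dots,r_K)$ and $\sum_{k=1}^K\alpha_kR_k^\ast\le\sum_{k=1}^K\alpha_kR_k'$ for every $(R_1',\dots,R_K')\in\mathcal{R}(r_1,\dots,r_K)$.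
   Context: Logarithms are natural. $\mathcal{K}=\{1,\dots,K\}$, $\mathcal{A}^c=\mathcal{K}\setminus\mathcal{A}$. $\mathcal{F}(D)=\{(r_1,\dots,r_K)\in\mathbb{R}_+^K:\ \sum_{k=1}^K\frac{1-e^{-2r_k}}{\sigma_{N_k}^2}=\frac1D\}$. For $(r_1,\dots,r_K)\in\mathbb{R}_+^K$, $\mathcal{R}(r_1,\dots,r_K)$ is the set of all $(R_1,\dots,R_K)$ such that for every $\mathcal{A}\subseteq\mathcal{K}$: $\sum_{k\in\mathcal{A}}R_k\ge\sum_{k\in\mathcal{A}}r_k+\frac12\log(\frac1{\sigma_X^2}+\frac1D)-\frac12\log(\frac1{\sigma_X^2}+\sum_{k\in\mathcal{A}^c}\frac{1-e^{-2r_k}}{\sigma_{N_k}^2})$. *)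

From HB Require Import structures.
From mathcomp Require Import all_boot all_order all_algebra.
From mathcomp Require Import all_classical all_reals all_analysis.
Set Implicit Arguments. Unset Strict Implicit. Unset Printing Implicit Defensive.
Import Order.TTheory GRing.Theory Num.Theory.
Local Open Scope ring_scope.

(* Indices k = 1..K are represented by 'I_K (k-1), order preserved. *)

Definition gterm {R : realType} {K : nat} (sN2 r : 'I_K -> R) (k : 'I_K) : R :=
  (1 - expR (- (2 * r k))) / sN2 k.

Definition inF {R : realType} {K : nat} (sN2 : 'I_K -> R) (D : R) (r : 'I_K -> R) : Prop :=
  (forall k, 0 <= r k) /\ \sum_(k < K) gterm sN2 r k = 1 / D.

Definition inRegion {R : realType} {K : nat} (sX2 : R) (sN2 : 'I_K -> R) (D : R)
  (r Rt : 'I_K -> R) : Prop :=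
  forall A : {set 'I_K},
    \sum_(k in A) r k + (ln (1 / sX2 + 1 / D)) / 2
      - (ln (1 / sX2 + \sum_(k in ~: A) gterm sN2 r k)) / 2
    <= \sum_(k in A) Rt k.

Definition Rstar {R : realType} {K : nat} (sX2 : R) (sN2 r : 'I_K -> R) (k : 'I_K) : R :=
  r k + (ln (1 / sX2 + \sum_(i < K | (k <= i)%N) gterm sN2 r i)) / 2
      - (ln (1 / sX2 + \sum_(i < K | (k < i)%N) gterm sN2 r i)) / 2.

(* R* is the corner point of successive decoding in the order K, K-1, ..., 1:
   its prefix sums telescope, so every constraint of the region indexed by a
   prefix {1, ..., j} is tight.  For an arbitrary A the constraint follows by
   removing the largest element of A, using that S |-> ln (1/sX2 + sum_(k in S)
   g_k) is submodular because ln is concave.  Optimality is Abel summation: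
   with nonincreasing nonnegative weights, the weighted sum of R' - R* is a
   nonnegative combination of its prefix sums, which are nonnegative because
   the prefix constraints are tight at R*. *)
From HB Require Import structures.
From mathcomp Require Import all_boot all_order all_algebra.
From mathcomp Require Import all_classical all_reals all_analysis.
From mathcomp Require Import lra.

Set Implicit Arguments.
Unset Strict Implicit.
Unset Printing Implicit Defensive.
Import Order.TTheory GRing.Theory Num.Theory.
Local Open Scope ring_scope.

Lemma ln_increment_antitone (R : realType) (a b g : R) :
  0 < a -> a <= b -> 0 <= g -> ln (g + b) - ln b <= ln (g + a) - ln a.
Proof.
move=> a_gt0 ab g_ge0.
have b_gt0 : 0 < b by apply: lt_le_trans ab.
have ga_gt0 : 0 < g + a by lra.
have gb_gt0 : 0 < g + b by lra.
suff : ln (a * (g + b)) <= ln (b * (g + a)) by rewrite !lnM ?posrE //; lra.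
rewrite ler_ln ?posrE ?mulr_gt0 // !mulrDr (mulrC a b) lerD2r.
exact: ler_wpM2r.
Qed.

Lemma sum_antitone_mul_ge0 (R : realDomainType) (n : nat) (a d : 'I_n -> R) :
  (forall i j : 'I_n, (i <= j)%N -> a j <= a i) ->
  (forall k, 0 <= a k) ->
  (forall j : 'I_n, 0 <= \sum_(k < n | (k <= j)%N) d k) ->
  0 <= \sum_(k < n) a k * d k.
Proof.
elim: n a d => [|n IHn] a d a_anti a_ge0 d_prefix; first by rewrite big_ord0.
(* Shift all weights down by the smallest one, [a ord_max], and recurse. *)
have -> : \sum_(k < n.+1) a k * d k =
    \sum_(k < n.+1) (a k - a ord_max) * d k + a ord_max * \sum_(k < n.+1) d k.
  by rewrite mulr_sumr -big_split /=; apply: eq_bigr => k _; rewrite mulrBl subrK.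
rewrite big_ord_recr /= subrr mul0r addr0.
apply: addr_ge0; last first.
  apply: mulr_ge0 => //.
  rewrite (eq_bigl (fun k : 'I_n.+1 => k <= @ord_max n)%N) => [|k].
    exact: d_prefix.
  by rewrite leq_ord.
apply: IHn => [i j ij|k|j]; first by rewrite lerD2r; apply: a_anti.
  by rewrite subr_ge0; apply/a_anti/leq_ord.
have := d_prefix (widen_ord (leqnSn n) j).
by rewrite big_mkcond big_ord_recr /= leqNgt ltn_ord addr0 -big_mkcond.
Qed.

Section Precision.
Variables (R : realType) (K : nat) (sX2 : R) (sN2 r : 'I_K -> R).
Hypotheses (sX2_gt0 : 0 < sX2) (sN2_gt0 : forall k, 0 < sN2 k)
  (r_ge0 : forall k, 0 <= r k).

(* The inverse MMSE of X given the descriptions indexed by S. *)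
Definition precision (S : {set 'I_K}) : R :=
  1 / sX2 + \sum_(k in S) gterm sN2 r k.

Lemma gterm_ge0 k : 0 <= gterm sN2 r k.
Proof.
apply: divr_ge0; last exact: ltW.
by rewrite subr_ge0 expR_le1 oppr_le0 mulr_ge0.
Qed.

Lemma precision_gt0 S : 0 < precision S.
Proof. by rewrite ltr_wpDr ?divr_gt0 ?sumr_ge0 // => k _; apply: gterm_ge0. Qed.

Lemma precisionU1 (i : 'I_K) (S : {set 'I_K}) : i \notin S ->
  precision (i |: S) = gterm sN2 r i + precision S.
Proof. by move=> iNS; rewrite /precision big_setU1 //= addrCA. Qed.

Lemma precision_le (S T : {set 'I_K}) : S \subset T -> precision S <= precision T.
Proof.
move=> /finset.setIidPr TS; rewrite lerD2l [leRHS](big_setID S) /= TS lerDl.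
by rewrite sumr_ge0 // => k _; apply: gterm_ge0.
Qed.

Lemma ln_precision_submod (i : 'I_K) (S T : {set 'I_K}) :
  S \subset T -> i \notin T ->
  ln (precision (i |: T)) - ln (precision T)
    <= ln (precision (i |: S)) - ln (precision S).
Proof.
move=> ST iNT.
have iNS : i \notin S by apply: contraNN iNT => /(fintype.subsetP ST).
rewrite !precisionU1 //; apply: ln_increment_antitone (gterm_ge0 i).
  exact: precision_gt0.
exact: precision_le.
Qed.

Lemma precision_pred (P : pred 'I_K) :
  precision [set i | P i] = 1 / sX2 + \sum_(i | P i) gterm sN2 r i.
Proof. by rewrite /precision; congr (_ + _); apply: eq_bigl => i; rewrite inE. Qed.

Lemma RstarE k : Rstar sX2 sN2 r k =
  r k + ln (precision [set i : 'I_K | (k <= i)%N]) / 2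
      - ln (precision [set i : 'I_K | (k < i)%N]) / 2.
Proof. by rewrite !precision_pred. Qed.

Lemma set_geqE (i : 'I_K) :
  [set j : 'I_K | (i <= j)%N] = i |: [set j : 'I_K | (i < j)%N].
Proof. by apply/setP => j; rewrite !inE leq_eqVlt eq_sym. Qed.

Lemma Rstar_sum_ge (A : {set 'I_K}) :
  \sum_(k in A) r k + ln (precision [set: 'I_K]) / 2 - ln (precision (~: A)) / 2
    <= \sum_(k in A) Rstar sX2 sN2 r k.
Proof.
have [n] := ubnP #|A|; elim: n A => // n IHn A; rewrite ltnS => A_le_n.
have [->|[i0 i0A]] := set_0Vmem A; first by rewrite !big_set0 finset.setC0; lra.
have [i iA i_max] := @arg_maxnP _ i0 (mem A) val i0A.
have {}iA : i \in A := iA.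
have tail_subC : [set j : 'I_K | (i < j)%N] \subset ~: A.
  apply/fintype.subsetP => j; rewrite !inE.
  by apply: contraTN => /i_max; rewrite -leqNgt.
have iNC : i \notin ~: A by rewrite inE negbK.
have := @ln_precision_submod i _ _ tail_subC iNC.
have := IHn (A :\ i); rewrite finset.setCD finset.setUC -set_geqE.
rewrite (cardsD1 i A) iA add1n in A_le_n; move/(_ A_le_n).
rewrite !(big_setD1 i iA) /= RstarE; lra.
Qed.

Lemma Rstar_prefix_sum (j : 'I_K) :
  \sum_(k < K | (k <= j)%N) Rstar sX2 sN2 r k =
  \sum_(k < K | (k <= j)%N) r k + ln (precision [set: 'I_K]) / 2
    - ln (precision [set k : 'I_K | (j < k)%N]) / 2.
Proof.
pose phi (m : nat) := ln (precision [set i : 'I_K | (m <= i)%N]) / 2.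
have -> : \sum_(k < K | (k <= j)%N) Rstar sX2 sN2 r k =
    \sum_(k < K | (k <= j)%N) r k + \sum_(k < j.+1) (phi k - phi k.+1).
  rewrite (big_ord_widen _ (fun k => phi k - phi k.+1) (ltn_ord j)) -big_split /=.
  by apply: eq_bigr => k _; rewrite RstarE /phi; lra.
rewrite -(big_mkord xpredT (fun k => phi k - phi k.+1)).
have -> : [set: 'I_K] = [set i : 'I_K | (0 <= i)%N] by apply/setP => i; rewrite !inE.
rewrite [X in _ + X = _](_ : _ = - \sum_(0 <= k < j.+1) (phi k.+1 - phi k)).
  by rewrite telescope_sumr // /phi; lra.
by rewrite -sumrN; apply: eq_bigr => k _; rewrite opprB.
Qed.

End Precision.

Theorem lemma1 (R : realType) (K : nat) (sX2 : R) (sN2 : 'I_K -> R) (D : R)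
  (r alpha : 'I_K -> R) :
  0 < sX2 -> (forall k, 0 < sN2 k) -> 0 < D ->
  inF sN2 D r ->
  (forall i j : 'I_K, (i <= j)%N -> alpha j <= alpha i) ->
  (forall k, 0 <= alpha k) ->
  inRegion sX2 sN2 D r (Rstar sX2 sN2 r) /\
  (forall Rp : 'I_K -> R, inRegion sX2 sN2 D r Rp ->
     \sum_(k < K) alpha k * Rstar sX2 sN2 r k <= \sum_(k < K) alpha k * Rp k).
Proof.
move=> sX2_gt0 sN2_gt0 _ [r_ge0 sum_gterm] alpha_anti alpha_ge0.
have precisionT : precision sX2 sN2 r [set: 'I_K] = 1 / sX2 + 1 / D.
  by rewrite -sum_gterm /precision; congr (_ + _); apply: eq_bigl => k; rewrite inE.
split=> [A | Rp Rp_in].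
  by rewrite -precisionT; exact: Rstar_sum_ge.
rewrite -subr_ge0 -sumrB; under eq_bigr do rewrite -mulrBr.
apply: sum_antitone_mul_ge0 => // j.
rewrite sumrB subr_ge0 Rstar_prefix_sum precisionT.
have := Rp_in [set k : 'I_K | (k <= j)%N].
have -> : ~: [set k : 'I_K | (k <= j)%N] = [set k : 'I_K | (j < k)%N].
  by apply/setP => k; rewrite !inE ltnNge.
by rewrite precision_pred !big_set.
Qed.
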